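(* Let $n \geq 1$ and $z \geq 2$ be integers, and let $\epsilon > 0$ be a constant. Let $\mathbf{f}_1^{(0)}, \dots, \mathbf{f}_n^{(0)}$ be arbitrary probability vectors in $\mathbb{R}^z$ (nonnegative entries summing to $1$). For $t \geq 1$ define recursively, for all $i, j \in \{1,\dots,n\}$, $$p_{i,j}^{(t)} = \frac{\alpha_i^{(t)}}{\epsilon + D\left(\mathbf{f}_i^{(t-1)}, \mathbf{f}_j^{(t-1)}\right)}, \qquad \mathbf{f}_i^{(t)} = \sum_{j=1}^n p_{i,j}^{(t)} \mathbf{f}_j^{(t-1)},$$ where $\alpha_i^{(t)} > 0$ is the normalizing constant chosen so that $\sum_{j=1}^n p_{i,j}^{(t)} = 1$, and $$D(\mathbf{u}, \mathbf{v}) = \sqrt{\frac{\sum_{k=1}^{z} (u_k - v_k)^2}{z}}$$ is the root-mean-square deviation. Then a consensus is reached: for every $i, j \in \{1, \dots, n\}$, $\mathbf{f}_i^{(t)} - \mathbf{f}_j^{(t)} \to 0$ as $t \to \infty$.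
   Context: The vectors $\mathbf{f}_i^{(t)}$ represent the (probabilistic) opinion of expert $i$ after $t$ revisions, over $z$ mutually exclusive outcomes; $\mathbf{f}_i^{(0)}$ is the originally reported opinion. Each revision replaces an expert's opinion by a convex combination (linear opinion pool) of all current opinions, with weights inversely related to the distance between opinions. *)

From mathcomp Require Import all_boot all_order all_algebra.
From mathcomp Require Import all_classical all_reals all_analysis.
Set Implicit Arguments. Unset Strict Implicit. Unset Printing Implicit Defensive.
Import Order.TTheory GRing.Theory Num.Theory.
Local Open Scope ring_scope.

(* Opinion profile: expert i : 'I_n, outcome k : 'I_z. *)
Definition profile (R : realType) (n z : nat) := 'I_n -> 'I_z -> R.

Definition prob_vec (R : realType) (z : nat) (u : 'I_z -> R) : Prop :=
  (forall k, 0 <= u k) /\ \sum_(k < z) u k = 1.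

Definition rmsd (R : realType) (z : nat) (u v : 'I_z -> R) : R :=
  Num.sqrt ((\sum_(k < z) (u k - v k) ^+ 2) / z%:R).

(* normalizing constant alpha_i: chosen so that sum_j p_ij = 1 *)
Definition alpha (R : realType) (n z : nat) (eps : R) (f : profile R n z)
  (i : 'I_n) : R :=
  (\sum_(j < n) (eps + rmsd (f i) (f j))^-1)^-1.

Definition weight (R : realType) (n z : nat) (eps : R) (f : profile R n z)
  (i j : 'I_n) : R :=
  alpha eps f i / (eps + rmsd (f i) (f j)).

Definition revise (R : realType) (n z : nat) (eps : R) (f : profile R n z)
  : profile R n z :=
  fun i k => \sum_(j < n) weight eps f i j * f j k.

Definition opinions (R : realType) (n z : nat) (eps : R) (f0 : profile R n z)
  (t : nat) : profile R n z := iter t (revise eps) f0.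

(* Every revision is a row-stochastic mixing whose weights are all at least
   eps / ((eps + 1) n): opinions stay in [0, 1], so every RMSD is at most 1.
   A stochastic matrix whose entries are bounded below by e shrinks the spread
   max - min of any vector by the factor 1 - n e, here 1 / (1 + eps), so the
   spread of each coordinate decays geometrically to 0. *)
From mathcomp Require Import all_boot all_order all_algebra.
From mathcomp Require Import all_classical all_reals all_analysis.
From mathcomp Require Import ring lra.
Set Implicit Arguments. Unset Strict Implicit. Unset Printing Implicit Defensive.
Import Order.TTheory GRing.Theory Num.Theory.
Import numFieldNormedType.Exports.
Local Open Scope classical_set_scope.
Local Open Scope ring_scope.

Section StochasticMix.
Variables (R : realFieldType) (n : nat) (w : 'I_n -> R) (e : R).
Hypotheses (w_sum1 : \sum_j w j = 1) (w_ge : forall j, e <= w j).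

Lemma mix_le_max (x : 'I_n -> R) (M : R) : (forall j, x j <= M) ->
  e * \sum_j (M - x j) <= M - \sum_j w j * x j.
Proof.
move=> xM; have -> : M - \sum_j w j * x j = \sum_j w j * (M - x j).
  rewrite -[M in M - _]mul1r -w_sum1 mulr_suml -sumrB.
  by apply: eq_bigr => j _; rewrite mulrBr.
by rewrite mulr_sumr; apply: ler_sum => j _; rewrite ler_wpM2r // subr_ge0.
Qed.

Lemma mix_ge_min (x : 'I_n -> R) (m : R) : (forall j, m <= x j) ->
  e * \sum_j (x j - m) <= \sum_j w j * x j - m.
Proof.
move=> mx; have -> : \sum_j w j * x j - m = \sum_j w j * (x j - m).
  rewrite -[m in _ - m]mul1r -w_sum1 mulr_suml -sumrB.
  by apply: eq_bigr => j _; rewrite mulrBr.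
by rewrite mulr_sumr; apply: ler_sum => j _; rewrite ler_wpM2r // subr_ge0.
Qed.

Lemma lower_bound_mul_size_le1 : n%:R * e <= 1.
Proof.
rewrite mulr_natl -w_sum1 -[in e *+ n](card_ord n) -sumr_const.
by apply: ler_sum.
Qed.

End StochasticMix.

Lemma mix_spread_contract (R : realFieldType) (n : nat) (w : 'I_n -> 'I_n -> R)
    (e r : R) (x : 'I_n -> R) :
  (forall i, \sum_j w i j = 1) -> (forall i j, e <= w i j) ->
  (forall j j', x j - x j' <= r) ->
  forall i i', \sum_j w i j * x j - \sum_j w i' j * x j <= (1 - n%:R * e) * r.
Proof.
move=> w_sum1 w_ge x_spread i i'.
pose jM := Order.arg_max i xpredT x; pose jm := Order.arg_min i xpredT x.
have x_le j : x j <= x jM by rewrite /jM; case: arg_maxP => // a _; apply.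
have x_ge j : x jm <= x j by rewrite /jm; case: arg_minP => // a _; apply.
have upper := mix_le_max (w_sum1 i) (w_ge i) x_le.
have lower := mix_ge_min (w_sum1 i') (w_ge i') x_ge.
have gaps : \sum_j (x jM - x j) + \sum_j (x j - x jm) = n%:R * (x jM - x jm).
  rewrite -big_split /= (eq_bigr (fun _ => x jM - x jm)) => [|j _]; last by ring.
  by rewrite sumr_const card_ord mulr_natl.
have ne_le1 := lower_bound_mul_size_le1 (w_sum1 i) (w_ge i).
have := x_spread jM jm; nra.
Qed.

Section Weights.
Variables (R : realType) (n z : nat) (eps : R) (f : profile R n z).
Hypothesis eps_gt0 : 0 < eps.

Lemma eps_rmsd_gt0 i j : 0 < eps + rmsd (f i) (f j).
Proof. by rewrite ltr_wpDr // sqrtr_ge0. Qed.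

Let S i := \sum_(j < n) (eps + rmsd (f i) (f j))^-1.

Let S_gt0 i : 0 < S i.
Proof.
rewrite /S (bigD1 i) //= ltr_wpDr ?invr_gt0 ?eps_rmsd_gt0 //.
by apply: sumr_ge0 => j _; rewrite invr_ge0 ltW ?eps_rmsd_gt0.
Qed.

Lemma weight_ge0 i j : 0 <= weight eps f i j.
Proof. by rewrite /weight /alpha divr_ge0 ?invr_ge0 ?ltW ?S_gt0 ?eps_rmsd_gt0. Qed.

Lemma sum_weight i : \sum_j weight eps f i j = 1.
Proof. by rewrite -mulr_sumr mulVf // gt_eqF ?S_gt0. Qed.

Lemma weight_lower_bound (D : R) i : (forall l, rmsd (f i) (f l) <= D) ->
  forall j, eps / ((eps + D) * n%:R) <= weight eps f i j.
Proof.
move=> rmsd_le j.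
have n_gt0 : (0 : R) < n%:R by rewrite ltr0n (leq_ltn_trans _ (ltn_ord i)).
have epsD_gt0 : 0 < eps + D by apply: lt_le_trans (eps_rmsd_gt0 i i) _; rewrite lerD2l.
have S_le : S i <= n%:R / eps.
  rewrite /S -[n in n%:R]card_ord -sumr_const mulr_suml.
  apply: ler_sum => l _; rewrite mul1r lef_pV2 ?posrE ?eps_rmsd_gt0 //.
  by rewrite lerDl sqrtr_ge0.
have inv_le : (eps + D)^-1 <= (eps + rmsd (f i) (f j))^-1.
  by rewrite lef_pV2 ?posrE ?eps_rmsd_gt0 // lerD2l.
rewrite /weight /alpha -/(S i) invfM mulrCA mulrC.
apply: ler_pM => //.
- by rewrite divr_ge0 ?ltW.
- by rewrite invr_ge0 ltW.
by rewrite -invf_div lef_pV2 ?posrE ?divr_gt0 ?S_gt0.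
Qed.

End Weights.

Definition unit_profile (R : realType) (n z : nat) (f : profile R n z) :=
  forall i k, 0 <= f i k <= 1.

Lemma rmsd_le1 (R : realType) (z : nat) (u v : 'I_z -> R) :
  (forall k, 0 <= u k <= 1) -> (forall k, 0 <= v k <= 1) -> rmsd u v <= 1.
Proof.
case: z u v => [|z] u v u01 v01; first by rewrite /rmsd big_ord0 mul0r sqrtr0.
rewrite /rmsd -[leRHS]sqrtr1 ler_sqrt // ler_pdivrMr ?ltr0n // mul1r.
rewrite -[in (z.+1)%:R](card_ord z.+1) -sumr_const.
apply: ler_sum => k _.
by have := u01 k; have := v01 k; move=> /andP[? ?] /andP[? ?]; nra.
Qed.

Lemma revise_unit (R : realType) (n z : nat) (eps : R) (f : profile R n z) :
  0 < eps -> unit_profile f -> unit_profile (revise eps f).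
Proof.
move=> eps_gt0 f01 i k; rewrite /revise.
have w_ge0 := weight_ge0 f eps_gt0 i.
have := mix_ge_min (sum_weight f eps_gt0 i) w_ge0 (m := 0) (x := f^~ k).
have := mix_le_max (sum_weight f eps_gt0 i) w_ge0 (M := 1) (x := f^~ k).
have [f_ge0 f_le1] : (forall j, 0 <= f j k) /\ (forall j, f j k <= 1).
  by split=> j; case/andP: (f01 j k).
rewrite !mul0r !subr0 subr_ge0 => /(_ f_le1) -> /(_ f_ge0).
by rewrite andbT.
Qed.

Lemma prob_vec_unit (R : realType) (z : nat) (u : 'I_z -> R) :
  prob_vec u -> forall k, 0 <= u k <= 1.
Proof.
move=> [u_ge0 u_sum1] k; rewrite u_ge0 -u_sum1 (bigD1 k) //= lerDl.
by apply: sumr_ge0.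
Qed.

Lemma opinions_spread (R : realType) (n z : nat) (eps : R) (f0 : profile R n z) :
  0 < eps -> unit_profile f0 -> forall t i j k,
  opinions eps f0 t i k - opinions eps f0 t j k <= (1 + eps)^-1 ^+ t.
Proof.
move=> eps_gt0 f0_01.
have opinions_unit t : unit_profile (opinions eps f0 t).
  by elim: t => [|t IH] //=; apply: revise_unit.
elim=> [|t IH] i j k.
  by have := opinions_unit 0%N i k; have := opinions_unit 0%N j k; rewrite expr0; lra.
set f := opinions eps f0 t.
have w_ge i' := weight_lower_bound eps_gt0
  (fun l => rmsd_le1 (opinions_unit t i') (opinions_unit t l)).
have n_gt0 : (0 : R) < n%:R by rewrite ltr0n (leq_ltn_trans _ (ltn_ord i)).
have factor : 1 - n%:R * (eps / ((eps + 1) * n%:R)) = (1 + eps)^-1.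
  have eps1_gt0 : 0 < 1 + eps by rewrite addr_gt0.
  by field; rewrite !gt_eqF.
rewrite exprS -[X in X * _]factor.
exact: mix_spread_contract (sum_weight f eps_gt0) w_ge (fun a b => IH a b k) i j.
Qed.

Theorem theorem1 (R : realType) (n z : nat) (eps : R)
  (f0 : 'I_n -> 'I_z -> R) :
  (1 <= n)%N -> (2 <= z)%N -> 0 < eps ->
  (forall i, prob_vec (f0 i)) ->
  forall (i j : 'I_n) (k : 'I_z),
    (fun t : nat => opinions eps f0 t i k - opinions eps f0 t j k) @ \oo --> (0 : R).
Proof.
move=> _ _ eps_gt0 f0_prob i j k.
have f0_01 : unit_profile f0 by move=> a; apply: prob_vec_unit.
have spread := opinions_spread eps_gt0 f0_01.
have factor_lt1 : `|(1 + eps)^-1| < 1.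
  by rewrite ger0_norm ?invr_ge0 ?addr_ge0 ?ltW // invf_lt1 ?ltrDl ?addr_gt0.
apply: (@squeeze_cvgr _ _ _ _ (fun t => - (1 + eps)^-1 ^+ t) (fun t => (1 + eps)^-1 ^+ t)).
- by apply: nearW => t; rewrite lerNl opprB spread spread.
- by rewrite -oppr0; apply: cvgN; apply: cvg_expr.
- exact: cvg_expr.
Qed.
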